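(* Let $(H,\partial)$ be a right Cartan–Eilenberg system, with right couple $(A'',E^1,\alpha,\beta,\gamma)$. Then there is a natural isomorphism $$W''\xrightarrow{\ \cong\ }\ker(\kappa)$$ of internal degree $-1$, where $W''=\operatorname{colim}_s\operatorname{Rlim}_r K_\infty\operatorname{im}^rA''_s$ is Boardman's whole-plane obstruction group of the right couple and $\kappa\colon \operatorname{colim}_j\lim_iH(i,j)\to\lim_i\operatorname{colim}_jH(i,j)$ is the interchange morphism of the underlying Cartan–Eilenberg system. (No convergence hypothesis is assumed.)
   Context: Let $R$ be a ring and $\mathcal{A}$ the abelian category of $\mathbb{Z}$-graded $R$-modules (grading = internal degree). For a linearly ordered set $\mathcal{I}$, an $\mathcal{I}$-system $(H,\partial)$ consists of objects $H(i,j)\in\mathcal{A}$ for $i\le j$ in $\mathcal{I}$, functorial morphisms $\eta\colon H(i,j)\to H(i',j')$ of internal degree $0$ for $i\le i'$, $j\le j'$, and natural morphisms $\partial\colon H(j,k)\to H(i,j)$ of internal degree $-1$ for $i\le j\le k$ (commuting with the $\eta$'s), such that $H(i,j)\xrightarrow{\eta}H(i,k)\xrightarrow{\eta}H(j,k)\xrightarrow{\partial}H(i,j)$ is exact at each vertex for all $i\le j\le k$. A Cartan–Eilenberg system is a $\mathbb{Z}$-system; a right Cartan–Eilenberg system is a $(\mathbb{Z}\cup\{+\infty\})$-system, $+\infty$ being the greatest element; its underlying Cartan–Eilenberg system is its restriction to $\mathbb{Z}$. The right couple of a right Cartan–Eilenberg system: $A''_s=H(s,\infty)$, $E^1_s=H(s-1,s)$,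 $\alpha_s=\eta\colon A''_{s-1}\to A''_s$, $\beta_s=\partial\colon H(s,\infty)\to H(s-1,s)$, $\gamma_s=\eta\colon H(s-1,s)\to H(s-1,\infty)$. For an exact couple (or any sequence) $\cdots\to A_{s-1}\xrightarrow{\alpha}A_s\to\cdots$: $A_\infty=\operatorname{colim}_sA_s$ with structure maps $\iota_s\colon A_s\to A_\infty$; $\operatorname{im}^rA_s=\operatorname{im}(\alpha^r\colon A_{s-r}\to A_s)$; $K_\infty\operatorname{im}^rA_s=\ker(\iota_s)\cap\operatorname{im}^rA_s$, a decreasing sequence in $r$; $W=\operatorname{colim}_s\operatorname{Rlim}_rK_\infty\operatorname{im}^rA_s$ (colimit along maps induced by $\alpha$), where $\operatorname{Rlim}=\lim^1$. Limits/derived limits over $i$ are along $\eta\colon H(i-1,j)\to H(i,j)$ as $i\to-\infty$, colimits over $j$ along $\eta\colon H(i,j)\to H(i,j+1)$. The interchange morphism $\kappa\colon\operatorname{colim}_j\lim_iH(i,j)\to\lim_i\operatorname{colim}_jH(i,j)$ is the canonical morphism whose restriction to $\lim_iH(i,j)$ followed by projection to $\operatorname{colim}_jH(i,j)$ is $\lim_iH(i,j)\to H(i,j)\to\operatorname{colim}_jH(i,j)$. *)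

From HB Require Import structures.
From mathcomp Require Import all_boot all_order all_algebra.
Set Implicit Arguments. Unset Strict Implicit. Unset Printing Implicit Defensive.
Import Order.TTheory GRing.Theory Num.Theory.
Local Open Scope ring_scope.

Inductive ext := Fin of int | Inf.

Definition ext_le (a b : ext) : Prop :=
  match a, b with
  | Fin x, Fin y => (x <= y)%R
  | _, Inf => True
  | Inf, Fin _ => False
  end.

Section RightCE.
Variable R : pzRingType.

(** A right Cartan–Eilenberg system in graded left R-modules.
    [obj i j n] is the degree-n part of H(i,j) (only meaningful for i <= j);
    [eta i j i' j' n] is the degree-0 map H(i,j) -> H(i',j') in degree n
    (meaningful for i <= i', j <= j'); [del i j k n] is the degree -1 map
    H(j,k)_n -> H(i,j)_{n-1}. Values at invalid indices are irrelevant. *)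
Record RCE := {
  obj : ext -> ext -> int -> lmodType R;
  eta : forall i j i' j' n, {linear obj i j n -> obj i' j' n};
  del : forall i j k n, {linear obj j k n -> obj i j (n - 1)};
  eta_id : forall i j n (x : obj i j n), ext_le i j -> eta i j i j n x = x;
  eta_comp : forall i j i' j' i'' j'' n (x : obj i j n),
      ext_le i j -> ext_le i' j' -> ext_le i'' j'' ->
      ext_le i i' -> ext_le j j' -> ext_le i' i'' -> ext_le j' j'' ->
      eta i' j' i'' j'' n (eta i j i' j' n x) = eta i j i'' j'' n x;
  del_nat : forall i j k i' j' k' n (x : obj j k n),
      ext_le i j -> ext_le j k -> ext_le i' j' -> ext_le j' k' ->
      ext_le i i' -> ext_le j j' -> ext_le k k' ->
      eta i j i' j' (n - 1) (del i j k n x) = del i' j' k' n (eta j k j' k' n x);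
  exact_ik : forall i j k n (y : obj i k n), ext_le i j -> ext_le j k ->
      (eta i k j k n y = 0 <-> exists x : obj i j n, eta i j i k n x = y);
  exact_jk : forall i j k n (y : obj j k n), ext_le i j -> ext_le j k ->
      (del i j k n y = 0 <-> exists x : obj i k n, eta i k j k n x = y);
  exact_ij : forall i j k n (y : obj i j (n - 1)), ext_le i j -> ext_le j k ->
      (eta i j i k (n - 1) y = 0 <-> exists x : obj j k n, del i j k n x = y)
}.

Record RCEMor (X Y : RCE) := {
  mor : forall i j n, {linear obj X i j n -> obj Y i j n};
  mor_eta : forall i j i' j' n (x : obj X i j n),
      ext_le i j -> ext_le i' j' -> ext_le i i' -> ext_le j j' ->
      mor i' j' n (eta X i j i' j' n x) = eta Y i j i' j' n (mor i j n x);
  mor_del : forall i j k n (x : obj X j k n), ext_le i j -> ext_le j k ->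
      mor i j (n - 1) (del X i j k n x) = del Y i j k n (mor j k n x)
}.

Variable X : RCE.

(** Right couple: A''_s = H(s, oo); the composite alpha^(t-s) : A''_s -> A''_t
    equals eta by functoriality. *)
Definition Acp (s n : int) := obj X (Fin s) Inf n.
Definition alpha (s t n : int) : Acp s n -> Acp t n := eta X (Fin s) Inf (Fin t) Inf n.
Arguments alpha s t n _ : clear implicits.

(** K_oo im^r A''_s = ker(iota_s) ∩ im(alpha^r : A''_{s-r} -> A''_s), where
    ker(iota_s : A''_s -> colim A'') = {a | alpha^(t-s) a = 0 for some t >= s}. *)
Definition Kinf (n : int) (r : nat) (s : int) (a : Acp s n) : Prop :=
  (exists b : Acp (s - r%:Z) n, alpha (s - r%:Z) s n b = a) /\
  (exists t, s <= t /\ alpha s t n a = 0).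
Arguments Kinf n r s a : clear implicits.

(** W''_n = colim_s Rlim_r K_oo im^r A''_s  (degree n), presented by
    representatives (s, x) with x in prod_r K_oo im^r A''_s;
    Rlim_r = coker (prod_r K^r -> prod_r K^r, (w_r) |-> (w_r - w_{r+1})). *)
Definition Wrep (n : int) := {s : int & nat -> Acp s n}.

Definition Wmem n (a : Wrep n) : Prop :=
  forall r, Kinf n r (projT1 a) (projT2 a r).

Definition Weqv n (a b : Wrep n) : Prop :=
  exists u, projT1 a <= u /\ projT1 b <= u /\
  exists w : nat -> Acp u n, (forall r, Kinf n r u (w r)) /\
  forall r, alpha (projT1 a) u n (projT2 a r) - alpha (projT1 b) u n (projT2 b r)
            = w r - w r.+1.

Definition WLin n (a b : Wrep n) (c : R) (z : Wrep n) : Prop :=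
  exists u, projT1 a <= u /\ projT1 b <= u /\ projT1 z <= u /\
  exists w : nat -> Acp u n, (forall r, Kinf n r u (w r)) /\
  forall r, alpha (projT1 z) u n (projT2 z r)
            - (alpha (projT1 a) u n (projT2 a r) + c *: alpha (projT1 b) u n (projT2 b r))
            = w r - w r.+1.

(** ker(kappa) in degree m, kappa : colim_j lim_i H(i,j) -> lim_i colim_j H(i,j),
    presented by representatives (j, x) with x = (x_i)_{i <= j} a compatible family
    (an element of lim_i H(i,j)) all of whose components vanish in colim_j H(i,j). *)
Definition Krep (m : int) := {j : int & forall i : int, obj X (Fin i) (Fin j) m}.

Definition push (m i j k : int) : obj X (Fin i) (Fin j) m -> obj X (Fin i) (Fin k) m :=
  eta X (Fin i) (Fin j) (Fin i) (Fin k) m.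

Definition Kmem m (a : Krep m) : Prop :=
  (forall i, i <= projT1 a ->
     eta X (Fin (i - 1)) (Fin (projT1 a)) (Fin i) (Fin (projT1 a)) m (projT2 a (i - 1))
     = projT2 a i) /\
  (forall i, i <= projT1 a ->
     exists k, projT1 a <= k /\ push k (projT2 a i) = 0).

Definition Keqv m (a b : Krep m) : Prop :=
  exists k, projT1 a <= k /\ projT1 b <= k /\
  forall i, i <= projT1 a -> i <= projT1 b ->
    push k (projT2 a i) = push k (projT2 b i).

Definition KLin m (a b : Krep m) (c : R) (z : Krep m) : Prop :=
  exists k, projT1 a <= k /\ projT1 b <= k /\ projT1 z <= k /\
  forall i, i <= projT1 a -> i <= projT1 b -> i <= projT1 z ->
    push k (projT2 z i) = push k (projT2 a i) + c *: push k (projT2 b i).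

Definition is_iso_deg_m1 n (f : Wrep n -> Krep (n - 1)) : Prop :=
  (forall a, Wmem a -> Kmem (f a)) /\
  (forall a b, Wmem a -> Wmem b -> Weqv a b -> Keqv (f a) (f b)) /\
  (forall a b c z, Wmem a -> Wmem b -> Wmem z -> WLin a b c z ->
     KLin (f a) (f b) c (f z)) /\
  (forall a b, Wmem a -> Wmem b -> Keqv (f a) (f b) -> Weqv a b) /\
  (forall k, Kmem k -> exists a, Wmem a /\ Keqv (f a) k).

End RightCE.

Definition Wmap (R : pzRingType) (X Y : RCE R) (phi : RCEMor X Y) n
  (a : Wrep X n) : Wrep Y n :=
  existT _ (projT1 a) (fun r => mor phi (Fin (projT1 a)) Inf n (projT2 a r)).

Definition Kmap (R : pzRingType) (X Y : RCE R) (phi : RCEMor X Y) m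
  (a : Krep X m) : Krep Y m :=
  existT _ (projT1 a) (fun i => mor phi (Fin i) (Fin (projT1 a)) m (projT2 a i)).

From Pilot Require Import Defs.
From HB Require Import structures.
From mathcomp Require Import all_boot all_order all_algebra zify.
From Stdlib Require Import IndefiniteDescription.
Import Order.TTheory GRing.Theory Num.Theory.
Local Open Scope ring_scope.
Set Implicit Arguments. Unset Strict Implicit.

(* A representative (x_r)_r of W'' at stage s, with x_r in K_oo im^r A''_s, is
   sent to the family y_i = del (x_0 + ... + x_(s-i-1)) in H(i,s), i <= s.  By
   exactness, ker (del : H(s,oo) -> H(i,s)) is the image of A''_i, which contains
   every x_r with r >= s - i; so y_i is "del of the infinite sum of the x_r", the
   family is compatible, and each y_i dies in colim_j H(i,j) because the x_r die
   in colim A''.  An Rlim relation x_r - x'_r = w_r - w_(r+1) telescopes to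
   y_i - y'_i = del w_0, which vanishes once w_0 dies.  Conversely, exactness
   lifts a family y_i dying in the colimit to elements a_i of A''_s dying in
   colim A'' with del a_i = y_i; their consecutive differences are a preimage. *)

Section WholePlaneObstruction.
Variables (R : pzRingType) (X : RCE R) (n : int).

Local Notation A s := (Acp X s n).
Local Notation al s t := (@alpha R X s t n).
Local Notation dl i s := (del X (Fin i) (Fin s) Inf n).

Lemma alpha_comp s t u (x : A s) : s <= t -> t <= u -> al t u (al s t x) = al s u x.
Proof. by move=> st tu; rewrite /alpha eta_comp. Qed.

Lemma alpha0 s t : al s t 0 = 0.
Proof. by rewrite /alpha linear0. Qed.

Lemma alphaD s t (v w : A s) : al s t (v + w) = al s t v + al s t w.
Proof. by rewrite /alpha linearD. Qed.

Lemma alphaN s t (v : A s) : al s t (- v) = - al s t v.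
Proof. by rewrite /alpha linearN. Qed.

Lemma alphaB s t (v w : A s) : al s t (v - w) = al s t v - al s t w.
Proof. by rewrite alphaD alphaN. Qed.

Lemma alpha_sum s t N (f : nat -> A s) :
  al s t (\sum_(0 <= r < N) f r) = \sum_(0 <= r < N) al s t (f r).
Proof. by rewrite /alpha linear_sum. Qed.

Definition im_alpha m u (v : A u) := exists b : A m, al m u b = v.
Definition ker_iota u (v : A u) := exists t, u <= t /\ al u t v = 0.
Arguments im_alpha m u v : clear implicits.
Arguments ker_iota u v : clear implicits.

Definition im_seq s (x : nat -> A s) := forall r, im_alpha (s - r%:Z) s (x r).

Lemma WmemP s (x : nat -> A s) : Wmem (existT _ s x : Wrep X n) <->
  im_seq x /\ (forall r, ker_iota s (x r)).
Proof.
by split=> [h | [imx kx] r]; [split=> r; case: (h r) | exact: (conj (imx r) (kx r))].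
Qed.

Lemma ker_iota0 u : ker_iota u 0.
Proof. by exists u; rewrite alpha0. Qed.

Lemma alpha_eq0_le u t t' (v : A u) :
  u <= t -> t <= t' -> al u t v = 0 -> al u t' v = 0.
Proof. by move=> ut tt' e; rewrite -(alpha_comp v ut tt') e alpha0. Qed.

Lemma ker_iotaD u (v w : A u) : ker_iota u v -> ker_iota u w -> ker_iota u (v + w).
Proof.
move=> [t1 [ut1 e1]] [t2 [ut2 e2]].
have t1t : t1 <= Order.max t1 t2 by rewrite le_max lexx.
have t2t : t2 <= Order.max t1 t2 by rewrite le_max lexx orbT.
exists (Order.max t1 t2); split; first exact: le_trans t1t.
by rewrite alphaD (alpha_eq0_le ut1 t1t e1) (alpha_eq0_le ut2 t2t e2) addr0.
Qed.

Lemma ker_iotaN u (v : A u) : ker_iota u v -> ker_iota u (- v).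
Proof. by move=> [t [ut e]]; exists t; rewrite alphaN e oppr0. Qed.

Lemma ker_iotaB u (v w : A u) : ker_iota u v -> ker_iota u w -> ker_iota u (v - w).
Proof. by move=> kv kw; apply/ker_iotaD/ker_iotaN. Qed.

Lemma ker_iota_sum u N (f : nat -> A u) :
  (forall r, ker_iota u (f r)) -> ker_iota u (\sum_(0 <= r < N) f r).
Proof. by move=> kf; elim/big_ind: _ => //; [exact: ker_iota0 | exact: ker_iotaD]. Qed.

Lemma ker_iota_alpha s k (v : A s) : s <= k -> ker_iota s v -> ker_iota k (al s k v).
Proof.
move=> sk [t [st e]]; have [tk | kt] := leP t k.
- by exists k; rewrite (alpha_eq0_le st tk e) alpha0.
- by exists t; rewrite alpha_comp // ltW.
Qed.

Lemma im_alpha0 m u : im_alpha m u 0.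
Proof. by exists 0; rewrite alpha0. Qed.

Lemma im_alphaD m u (v w : A u) :
  im_alpha m u v -> im_alpha m u w -> im_alpha m u (v + w).
Proof. by move=> [b <-] [c <-]; exists (b + c); rewrite alphaD. Qed.

Lemma im_alphaB m u (v w : A u) :
  im_alpha m u v -> im_alpha m u w -> im_alpha m u (v - w).
Proof. by move=> [b <-] [c <-]; exists (b - c); rewrite alphaB. Qed.

Lemma im_alpha_sum m u a b (f : nat -> A u) :
  (forall r, (a <= r < b)%N -> im_alpha m u (f r)) ->
  im_alpha m u (\sum_(a <= r < b) f r).
Proof.
move=> imf; rewrite big_nat_cond; elim/big_ind: _ => //.
- exact: im_alpha0.
- exact: im_alphaD.
- by move=> r /andP[/imf].
Qed.

Lemma im_alpha_alpha m s k (v : A s) :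
  m <= s -> s <= k -> im_alpha m s v -> im_alpha m k (al s k v).
Proof. by move=> ms sk [b <-]; exists b; rewrite alpha_comp. Qed.

Lemma im_alphaW m m' u (v : A u) :
  m <= m' -> m' <= u -> im_alpha m u v -> im_alpha m' u v.
Proof. by move=> mm' m'u [b <-]; exists (al m m' b); rewrite alpha_comp. Qed.

Lemma del_eq0P i u (v : A u) : i <= u -> dl i u v = 0 <-> im_alpha i u v.
Proof.
move=> iu; rewrite (exact_jk (i:=Fin i) (j:=Fin u) (k:=Inf) v iu I).
by split=> [[b eb] | [b eb]]; exists b.
Qed.

Lemma del_im_alpha m i u (v : A u) :
  m <= i -> i <= u -> im_alpha m u v -> dl i u v = 0.
Proof. by move=> mi iu /(im_alphaW mi iu) /(del_eq0P _ iu). Qed.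

Lemma push_del i s k (v : A s) : i <= s -> s <= k ->
  push k (dl i s v) = dl i k (al s k v).
Proof. by move=> si ks; rewrite /push (del_nat (k':=Inf)) //= (le_trans si ks). Qed.

Lemma eta_del i0 i u (v : A u) : i0 <= i -> i <= u ->
  Defs.eta X (Fin i0) (Fin u) (Fin i) (Fin u) (n - 1) (dl i0 u v) = dl i u v.
Proof.
move=> i0i iu; rewrite (del_nat (k':=Inf)) //= ?lexx ?(le_trans i0i iu) //.
by rewrite eta_id.
Qed.

Lemma del_sum_tail i u (N M : nat) (f : nat -> A u) : i <= u -> (N <= M)%N ->
  (forall r, (N <= r < M)%N -> im_alpha i u (f r)) ->
  dl i u (\sum_(0 <= r < M) f r) = dl i u (\sum_(0 <= r < N) f r).
Proof.
move=> iu NM imf; rewrite (big_cat_nat (leq0n N) NM) linearD /=.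
by rewrite (del_im_alpha (lexx i) iu (im_alpha_sum imf)) addr0.
Qed.

Definition delta_sum s i (x : nat -> A s) :=
  dl i s (\sum_(0 <= r < absz (s - i)%R) x r).

Lemma eq_delta_sum s i (x y : nat -> A s) : x =1 y -> delta_sum i x = delta_sum i y.
Proof. by move=> xy; rewrite /delta_sum (eq_bigr _ (fun r _ => xy r)). Qed.

Lemma delta_sumB s i (x y : nat -> A s) :
  delta_sum i (fun r => x r - y r) = delta_sum i x - delta_sum i y.
Proof. by rewrite /delta_sum sumrB linearB. Qed.

Lemma delta_sumDZ s i c (x y : nat -> A s) :
  delta_sum i (fun r => x r + c *: y r) = delta_sum i x + c *: delta_sum i y.
Proof. by rewrite /delta_sum big_split /= -scaler_sumr linearD linearZ. Qed.

Lemma delta_sum_eta s i0 i (x : nat -> A s) : im_seq x -> i0 <= i -> i <= s ->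
  Defs.eta X (Fin i0) (Fin s) (Fin i) (Fin s) (n - 1) (delta_sum i0 x) = delta_sum i x.
Proof.
move=> imx i0i i_s; rewrite /delta_sum eta_del //.
apply: del_sum_tail => //; first lia.
by move=> r /andP[sir _]; apply: im_alphaW (imx r); lia.
Qed.

Lemma push_delta_sum s i k (x : nat -> A s) : im_seq x -> i <= s -> s <= k ->
  push k (delta_sum i x) = delta_sum i (fun r => al s k (x r)).
Proof.
move=> imx i_s sk; rewrite /delta_sum push_del // alpha_sum.
have ik := le_trans i_s sk.
symmetry; apply: del_sum_tail => //; first lia.
move=> r /andP[sir _]; apply: (@im_alphaW (s - r%:Z)); [lia | exact: ik |].
by apply: im_alpha_alpha (imx r); [lia | exact: sk].
Qed.

Lemma delta_sum_telescope u i (w : nat -> A u) : im_seq w -> i <= u ->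
  delta_sum i (fun r => w r - w r.+1) = dl i u (w 0%N).
Proof.
move=> imw iu; rewrite /delta_sum.
under eq_bigr do rewrite -opprB.
rewrite sumrN telescope_sumr // opprB linearB.
have imi : im_alpha i u (w (absz (u - i)%R)).
  by have := imw (absz (u - i)%R); rewrite (_ : u - _ = i) //; lia.
by rewrite (del_im_alpha (lexx i) iu imi) subr0.
Qed.

Lemma delta_sum_Rlim u (p q w : nat -> A u) : im_seq w -> ker_iota u (w 0%N) ->
  (forall r, p r - q r = w r - w r.+1) ->
  exists t, u <= t /\ forall i, i <= u -> push t (delta_sum i p) = push t (delta_sum i q).
Proof.
move=> imw [t [ut e]] pq; exists t; split=> // i iu.
apply/eqP; rewrite -subr_eq0 /push -linearB /= -delta_sumB (eq_delta_sum _ pq).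
by rewrite delta_sum_telescope // -/(push t _) push_del // e linear0.
Qed.

Definition W_to_ker (a : Wrep X n) : Krep X (n - 1) :=
  existT _ (projT1 a) (fun i => delta_sum i (projT2 a)).

Lemma push_comp m i j u t (y : obj X (Fin i) (Fin j) m) :
  i <= j -> j <= u -> u <= t -> push t (push u y) = push t y.
Proof.
move=> ij ju ut; have iu := le_trans ij ju.
by rewrite /push eta_comp //= (le_trans iu ut).
Qed.

Lemma push_delta_sum_stage s u t i (x : nat -> A s) :
  im_seq x -> i <= s -> s <= u -> u <= t ->
  push t (delta_sum i x) = push t (delta_sum i (fun r => al s u (x r))).
Proof. by move=> imx i_s su ut; rewrite -(push_comp _ i_s su ut) push_delta_sum. Qed.

Lemma W_to_ker_Kmem (a : Wrep X n) : Wmem a -> Kmem (W_to_ker a).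
Proof.
case: a => s x /WmemP[imx kx]; split=> /= i i_s.
- by apply: delta_sum_eta imx _ i_s; lia.
- have [t [st e]] := ker_iota_sum (absz (s - i)%R) kx.
  by exists t; split=> //; rewrite /delta_sum push_del // e linear0.
Qed.

Lemma W_to_ker_Keqv (a b : Wrep X n) :
  Wmem a -> Wmem b -> Weqv a b -> Keqv (W_to_ker a) (W_to_ker b).
Proof.
case: a b => [sa xa] [sb xb] /WmemP[ima _] /WmemP[imb _].
move=> [u [sau [sbu [w [/WmemP[imw kw] ab]]]]].
have [t [ut E]] := delta_sum_Rlim (p := fun r => al sa u (xa r))
  (q := fun r => al sb u (xb r)) imw (kw 0%N) ab.
exists t; do ![split; first exact: le_trans ut].
move=> i /= ia ib.
rewrite (push_delta_sum_stage ima ia sau ut) (push_delta_sum_stage imb ib sbu ut).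
exact/E/(le_trans ia).
Qed.

Lemma W_to_ker_KLin (a b z : Wrep X n) c : Wmem a -> Wmem b -> Wmem z ->
  WLin a b c z -> KLin (W_to_ker a) (W_to_ker b) c (W_to_ker z).
Proof.
case: a b z => [sa xa] [sb xb] [sz xz] /WmemP[ima _] /WmemP[imb _] /WmemP[imz _].
move=> [u [sau [sbu [szu [w [/WmemP[imw kw] zab]]]]]].
have [t [ut E]] := delta_sum_Rlim (p := fun r => al sz u (xz r))
  (q := fun r => al sa u (xa r) + c *: al sb u (xb r)) imw (kw 0%N) zab.
exists t; do ![split; first exact: le_trans ut].
move=> i /= ia ib iz.
rewrite (push_delta_sum_stage ima ia sau ut) (push_delta_sum_stage imb ib sbu ut).
rewrite (push_delta_sum_stage imz iz szu ut) E ?(le_trans iz) //.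
by rewrite delta_sumDZ /push linearD linearZ.
Qed.

Lemma W_to_ker_inj (a b : Wrep X n) :
  Wmem a -> Wmem b -> Keqv (W_to_ker a) (W_to_ker b) -> Weqv a b.
Proof.
case: a b => [sa xa] [sb xb] /WmemP[ima ka] /WmemP[imb kb] /= [k [sak [sbk E]]].
(* retyped so that lia reads them as inequalities of integers *)
have {}sak : sa <= (k : int) := sak; have {}sbk : sb <= (k : int) := sbk.
pose z r := al sb k (xb r) - al sa k (xa r).
have imz : im_seq z.
  move=> r; apply: im_alphaB.
  - apply: (@im_alphaW (sb - r%:Z)); [lia | lia | apply: im_alpha_alpha (imb r); lia].
  - apply: (@im_alphaW (sa - r%:Z)); [lia | lia | apply: im_alpha_alpha (ima r); lia].
have kz r : ker_iota k (z r) by apply: ker_iotaB; apply: ker_iota_alpha.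
have z_eq0 i : i <= k -> delta_sum i z = 0.
  move=> ik; pose i1 := Order.min i (Order.min sa sb).
  have i1i : i1 <= i by rewrite ge_min lexx.
  have i1a : i1 <= sa by rewrite !ge_min lexx orbT.
  have i1b : i1 <= sb by rewrite !ge_min lexx !orbT.
  rewrite -(delta_sum_eta imz i1i ik) delta_sumB.
  rewrite -(push_delta_sum ima i1a sak) -(push_delta_sum imb i1b sbk) E //.
  by rewrite subrr linear0.
exists k; do 2 split=> //.
exists (fun r => \sum_(0 <= r' < r) z r'); split.
- move=> r; split; last exact: ker_iota_sum.
  apply/del_eq0P; first lia.
  have := z_eq0 (k - r%:Z); rewrite /delta_sum (_ : absz _ = r); last lia.
  by apply; lia.
- by move=> r /=; rewrite big_nat_recr //= opprD addNKr opprB.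
Qed.

Lemma obj_diag_eq0 j m (y : obj X (Fin j) (Fin j) m) : y = 0.
Proof.
have jj : ext_le (Fin j) (Fin j) by exact: lexx.
have : Defs.eta X (Fin j) (Fin j) (Fin j) (Fin j) m y = 0.
  by apply/(exact_ik (j:=Fin j)) => //; exists y; rewrite eta_id.
by rewrite eta_id.
Qed.

(* y dies in H(i,oo), hence is del a0; then del (alpha a0) = push y = 0 in H(i,k),
   so alpha a0 comes from A''_i, and correcting a0 by that element makes it die. *)
Lemma lift_dying i j (y : obj X (Fin i) (Fin j) (n - 1)) : i <= j ->
  (exists k, j <= k /\ push k y = 0) -> exists a : A j, dl i j a = y /\ ker_iota j a.
Proof.
move=> ij [k [jk yk]]; have ik := le_trans ij jk.
have y_inf : Defs.eta X (Fin i) (Fin j) (Fin i) Inf (n - 1) y = 0.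
  rewrite -(eta_comp (i':=Fin i) (j':=Fin k)) //= ?lexx //.
  by move: yk; rewrite /push => ->; rewrite linear0.
have [a0 a0y] := (exact_ij (i:=Fin i) (j:=Fin j) (k:=Inf) y ij I).1 y_inf.
have [c ca0] : im_alpha i k (al j k a0) by apply/del_eq0P; rewrite // -push_del // a0y.
exists (a0 - al i j c); split.
- by rewrite linearB a0y (del_im_alpha (lexx i) ij) ?subr0 //; exists c.
- by exists k; split=> //; rewrite alphaB alpha_comp // ca0 subrr.
Qed.

Lemma lift_dying_family (y : Krep X (n - 1)) : Kmem y ->
  exists a : int -> A (projT1 y),
    [/\ forall i, i <= projT1 y -> dl i (projT1 y) (a i) = projT2 y i,
        forall i, ker_iota (projT1 y) (a i) & a (projT1 y) = 0].
Proof.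
case: y => j y [_ ydies] /=.
have lift i : exists a : A j,
    (i <= j -> dl i j a = y i /\ ker_iota j a) /\ (j <= i -> a = 0).
  case: (ltP i j) => [ij | ji].
  - have [a [ay ka]] := lift_dying (ltW ij) (ydies i (ltW ij)).
    by exists a; split=> // ji; move: (lt_le_trans ij ji); rewrite ltxx.
  - exists 0; split=> // ij; split; last exact: ker_iota0.
    have eij : i = j by apply/eqP; rewrite eq_le ij.
    by move: (y i); rewrite eij => yj; rewrite linear0 [RHS]obj_diag_eq0.
have [a ha] := @functional_choice _ _ _ lift.
exists a; split.
- by move=> i ij; case: (ha i) => [/(_ ij) []].
- move=> i; case: (leP i j) => [ij | /ltW ji]; first by case: (ha i) => [/(_ ij) []].
  by case: (ha i) => [_ /(_ ji) ->]; exact: ker_iota0.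
- by case: (ha j) => [_ /(_ (lexx j))].
Qed.

Lemma W_to_ker_surj (y : Krep X (n - 1)) :
  Kmem y -> exists a, Wmem a /\ Keqv (W_to_ker a) y.
Proof.
move=> ymem; have [a [ay ka aj]] := lift_dying_family ymem.
case: y ymem a ay ka aj => j y [ycompat _] /= a ay ka aj.
pose x r := a (j - r.+1%:Z) - a (j - r%:Z).
have sum_x m : \sum_(0 <= r < m) x r = a (j - m%:Z).
  by rewrite telescope_sumr // subr0 aj subr0.
exists (existT _ j x); split.
- apply/WmemP; split=> r; last exact: ker_iotaB.
  have jr : j - r%:Z <= j by lia.
  apply/del_eq0P => //; rewrite linearB.
  rewrite -(eta_del (i0 := j - r.+1%:Z) (i := j - r%:Z)) ?ay //; try lia.
  move: (ycompat _ jr); rewrite (_ : j - r%:Z - 1 = j - r.+1%:Z) => [-> | ]; last lia.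
  exact: subrr.
- exists j; split; first exact: lexx; split; first exact: lexx.
  move=> i /= ij _; rewrite /delta_sum sum_x (_ : j - _ = i) ?ay //; lia.
Qed.

End WholePlaneObstruction.

Lemma W_to_ker_natural (R : pzRingType) (X Y : RCE R) (phi : RCEMor X Y) n
  (a : Wrep X n) : Keqv (W_to_ker (Wmap phi a)) (Kmap phi (W_to_ker a)).
Proof.
case: a => s x; exists s; split; first exact: lexx; split; first exact: lexx.
move=> i /= i_s _; congr (push _ _).
by rewrite /delta_sum mor_del //= (linear_sum (mor phi _ _ _)).
Qed.

Theorem theorem6p7 (R : pzRingType) :
  exists F : forall (X : RCE R) (n : int), Wrep X n -> Krep X (n - 1),
    (forall (X : RCE R) (n : int), is_iso_deg_m1 (F X n)) /\
    (forall (X Y : RCE R) (phi : RCEMor X Y) (n : int) (a : Wrep X n),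
       Wmem a -> Keqv (F Y n (Wmap phi a)) (Kmap phi (F X n a))).
Proof.
exists (fun X n => @W_to_ker R X n); split.
- move=> X n; split; first exact: W_to_ker_Kmem.
  split; first exact: W_to_ker_Keqv.
  split; first by move=> a b c z; exact: W_to_ker_KLin.
  split; first exact: W_to_ker_inj.
  exact: W_to_ker_surj.
- by move=> X Y phi n a _; exact: W_to_ker_natural.
Qed.
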